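(* For a finite set $R$ of pairs $(r,s)$ of extended regular expressions (read as inequalities $r\mathrel{\dot\sqsubseteq}s$), define \[F(R)=R\cup\{(\nabla_A(r),\Delta_A(s))\mid (r,s)\in R,\ A\in\mathrm{next}(r)\ltimes\mathrm{next}(s),\ A\neq\emptyset\}.\] Then for all extended regular expressions $r,s$, the set $\bigcup_{i\in\mathbb N}F^{(i)}(\{(r,s)\})$ contains only finitely many pairs up to componentwise similarity.
   Context: $\Sigma$ is a countable (possibly infinite) alphabet. Literals are sets of symbols drawn from a fixed family $U\subseteq\mathcal P(\Sigma)$ containing $\emptyset$, $\Sigma$ and all singletons and closed under union, intersection and complement $\overline{A}=\Sigma\setminus A$. Extended regular expressions (EREs) are generated by $r,s ::= \epsilon \mid A \mid r+s \mid r\cdot s \mid r^* \mid r\,\&\,s \mid \neg r$ with $A$ a literal; the empty literal is written $\emptyset$. Similarity is the smallest congruence on EREs containing $r+s\sim s+r$, $(r+s)+t\sim r+(s+t)$, $r+r\sim r$ and $r+\emptyset\sim r$. Nullability: $\nu(\epsilon)=\nu(r^* )=\mathit{true}$, $\nu(A)=\mathit{false}$, $\nu(r+s)=\nu(r)\vee\nu(s)$, $\nu(r\cdot s)=\nu(r\&s)=\nu(r)\wedge\nu(s)$, $\nu(\neg r)=\neg\nu(r)$. Positive and negative derivatives with respect to a nonempty literal $B$, by simultaneous recursion: $\Delta_B(\epsilon)=\nabla_B(\epsilon)=\emptyset$; $\Delta_B(A)=\epsilon$ if $A\cap B\neq\emptyset$, else $\emptyset$; $\nabla_B(A)=\epsilon$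 if $B\subseteq A$, else $\emptyset$; for $\square\in\{\Delta,\nabla\}$: $\square_B(r+s)=\square_B(r)+\square_B(s)$, $\square_B(r\cdot s)=\square_B(r)\cdot s+\square_B(s)$ if $\nu(r)$ and $\square_B(r)\cdot s$ otherwise, $\square_B(r^* )=\square_B(r)\cdot r^*$, $\square_B(r\&s)=\square_B(r)\&\square_B(s)$; $\Delta_B(\neg r)=\neg\nabla_B(r)$, $\nabla_B(\neg r)=\neg\Delta_B(r)$. Join: $\mathfrak L_1\Join\mathfrak L_2=\{A_1\cap A_2,\ A_1\cap\overline{\bigcup\mathfrak L_2},\ \overline{\bigcup\mathfrak L_1}\cap A_2 \mid A_1\in\mathfrak L_1, A_2\in\mathfrak L_2\}$; left join $\mathfrak L_1\ltimes\mathfrak L_2=\{A_1\cap A_2,\ A_1\cap\overline{\bigcup\mathfrak L_2}\mid A_1\in\mathfrak L_1, A_2\in\mathfrak L_2\}$; $\mathfrak L_1\sqcap\mathfrak L_2=\{A_1\cap A_2\mid A_1\in\mathfrak L_1,A_2\in\mathfrak L_2\}$. Next literals: $\mathrm{next}(\epsilon)=\{\emptyset\}$; $\mathrm{next}(A)=\{A\}$; $\mathrm{next}(r+s)=\mathrm{next}(r)\Join\mathrm{next}(s)$; $\mathrm{next}(r\cdot s)=\mathrm{next}(r)\Join\mathrm{next}(s)$ if $\nu(r)$ and $\mathrm{next}(r)$ otherwise; $\mathrm{next}(r^* )=\mathrm{next}(r)$; $\mathrm{next}(r\&s)=\mathrm{next}(r)\sqcap\mathrm{next}(s)$; $\mathrm{next}(\neg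 r)=\mathrm{next}(r)\cup\{\bigcap_{A\in\mathrm{next}(r)}\overline{A}\}$. *)

From Stdlib Require Import List ClassicalEpsilon.
Import ListNotations.
Set Implicit Arguments.

Definition countable (T : Type) : Prop :=
  exists f : T -> nat, forall x y, f x = f y -> x = y.

Definition lit (T : Type) := T -> Prop.
Definition lit0 {T} : lit T := fun _ => False.
Definition litT {T} : lit T := fun _ => True.
Definition litI {T} (A B : lit T) : lit T := fun x => A x /\ B x.
Definition litU {T} (A B : lit T) : lit T := fun x => A x \/ B x.
Definition litC {T} (A : lit T) : lit T := fun x => ~ A x.

Record literal_family (T : Type) (U : lit T -> Prop) : Prop := {
  lf_empty : U lit0;
  lf_full : U litT;
  lf_single : forall a : T, U (fun x => x = a);
  lf_union : forall A B, U A -> U B -> U (litU A B);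
  lf_inter : forall A B, U A -> U B -> U (litI A B);
  lf_compl : forall A, U A -> U (litC A)
}.

Inductive ere (T : Type) : Type :=
| Eps : ere T
| Lit : lit T -> ere T
| Plus : ere T -> ere T -> ere T
| Cat : ere T -> ere T -> ere T
| Star : ere T -> ere T
| And : ere T -> ere T -> ere T
| Neg : ere T -> ere T.
Arguments Eps {T}.

Fixpoint lits_in {T} (U : lit T -> Prop) (r : ere T) : Prop :=
  match r with
  | Eps => True
  | Lit A => U A
  | Plus r s | Cat r s | And r s => lits_in U r /\ lits_in U s
  | Star r | Neg r => lits_in U r
  end.

Inductive sim {T} : ere T -> ere T -> Prop :=
| sim_refl r : sim r r
| sim_sym r s : sim r s -> sim s r
| sim_trans r s t : sim r s -> sim s t -> sim r t
| sim_comm r s : sim (Plus r s) (Plus s r)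
| sim_assoc r s t : sim (Plus (Plus r s) t) (Plus r (Plus s t))
| sim_idem r : sim (Plus r r) r
| sim_unit r : sim (Plus r (Lit lit0)) r
| sim_Plus r r' s s' : sim r r' -> sim s s' -> sim (Plus r s) (Plus r' s')
| sim_Cat r r' s s' : sim r r' -> sim s s' -> sim (Cat r s) (Cat r' s')
| sim_And r r' s s' : sim r r' -> sim s s' -> sim (And r s) (And r' s')
| sim_Star r r' : sim r r' -> sim (Star r) (Star r')
| sim_Neg r r' : sim r r' -> sim (Neg r) (Neg r').

Fixpoint nu {T} (r : ere T) : bool :=
  match r with
  | Eps => true
  | Lit _ => false
  | Plus r s => nu r || nu s
  | Cat r s | And r s => nu r && nu s
  | Star _ => true
  | Neg r => negb (nu r)
  end.

Definition pdec (P : Prop) : bool :=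
  if excluded_middle_informative P then true else false.

(* der true B = positive derivative Delta_B ; der false B = negative nabla_B *)
Fixpoint der {T} (pos : bool) (B : lit T) (r : ere T) : ere T :=
  match r with
  | Eps => Lit lit0
  | Lit A =>
      if pos then (if pdec (exists x, A x /\ B x) then Eps else Lit lit0)
      else (if pdec (forall x, B x -> A x) then Eps else Lit lit0)
  | Plus r s => Plus (der pos B r) (der pos B s)
  | Cat r s => if nu r then Plus (Cat (der pos B r) s) (der pos B s)
               else Cat (der pos B r) s
  | Star r => Cat (der pos B r) (Star r)
  | And r s => And (der pos B r) (der pos B s)
  | Neg r => Neg (der (negb pos) B r)
  end.

Definition Delta {T} (B : lit T) := der true B.
Definition Nabla {T} (B : lit T) := der false B.

(* finite sets of literals represented by lists *)
Definition bigU {T} (L : list (lit T)) : lit T := fun x => exists A, In A L /\ A x.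
Definition bigIC {T} (L : list (lit T)) : lit T := fun x => forall A, In A L -> ~ A x.

Definition ljoin {T} (L1 L2 : list (lit T)) : list (lit T) :=
  flat_map (fun A1 => flat_map (fun A2 =>
    [litI A1 A2; litI A1 (litC (bigU L2)); litI (litC (bigU L1)) A2]) L2) L1.

Definition lleftjoin {T} (L1 L2 : list (lit T)) : list (lit T) :=
  flat_map (fun A1 => flat_map (fun A2 =>
    [litI A1 A2; litI A1 (litC (bigU L2))]) L2) L1.

Definition lmeet {T} (L1 L2 : list (lit T)) : list (lit T) :=
  flat_map (fun A1 => map (fun A2 => litI A1 A2) L2) L1.

Fixpoint next {T} (r : ere T) : list (lit T) :=
  match r with
  | Eps => [lit0]
  | Lit A => [A]
  | Plus r s => ljoin (next r) (next s)
  | Cat r s => if nu r then ljoin (next r) (next s) else next r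
  | Star r => next r
  | And r s => lmeet (next r) (next s)
  | Neg r => next r ++ [bigIC (next r)]
  end.

Definition pairset T := (ere T * ere T) -> Prop.

Definition Fstep {T} (R : pairset T) : pairset T := fun p =>
  R p \/
  exists r s A, R (r, s) /\ In A (lleftjoin (next r) (next s)) /\
                A <> lit0 /\ p = (Nabla A r, Delta A s).

Fixpoint Fiter {T} (i : nat) (R : pairset T) : pairset T :=
  match i with 0 => R | S i => Fstep (Fiter i R) end.

Definition Funion {T} (r s : ere T) : pairset T :=
  fun p => exists i, Fiter i (fun q => q = (r, s)) p.

Definition finite_up_to_sim {T} (P : pairset T) : Prop :=
  exists L : list (ere T * ere T),
    forall p, P p -> exists q, In q L /\ sim (fst p) (fst q) /\ sim (snd p) (snd q).

(* Every pair added by F has the form (nabla_A r', delta_A s') with A a nonempty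
   literal, so the components of all pairs in the union are iterated derivatives
   of r and of s respectively.  It therefore suffices that an extended regular
   expression has only finitely many iterated derivatives up to similarity
   (Brzozowski's argument).  This goes by structural induction: derivatives of
   r + s and r & s are built componentwise, derivatives of ~r are negated
   derivatives of r, derivatives of r s are sums of terms a s and of derivatives
   of s, and derivatives of r* are sums of terms a r*, where a ranges over
   derivatives of r; finitely many representatives for the summands give finitely
   many sums modulo associativity, commutativity and idempotence of +.  Neither
   the countability of the alphabet nor the literal family plays a role. *)

From Stdlib Require Import List Classical ClassicalEpsilon FunctionalExtensionality
  PropExtensionality.
Import ListNotations.

Section Similarity.
Context {T : Type}.

(* Nonemptiness of B matters: with B empty, the negative derivative of the empty
   literal is [Eps], and derivatives would not respect the unit law of +. *)
Lemma der_lit0 (pos : bool) (B : lit T) :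
  (exists x, B x) -> der pos B (Lit lit0) = Lit lit0.
Proof.
  intros [x Hx]; destruct pos; simpl; unfold pdec;
    destruct excluded_middle_informative as [H | H]; auto.
  - destruct H as [y [[] _]].
  - exfalso; exact (H x Hx).
Qed.

Lemma nu_sim (r r' : ere T) : sim r r' -> nu r = nu r'.
Proof.
  induction 1; simpl; try congruence.
  - destruct (nu r), (nu s); reflexivity.
  - destruct (nu r), (nu s), (nu t); reflexivity.
  - destruct (nu r); reflexivity.
  - destruct (nu r); reflexivity.
Qed.

Lemma der_sim (r r' : ere T) (pos : bool) (B : lit T) :
  (exists x, B x) -> sim r r' -> sim (der pos B r) (der pos B r').
Proof.
  intros HB Hsim; revert pos; induction Hsim; intros pos; simpl.
  - apply sim_refl.
  - apply sim_sym; auto.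
  - eapply sim_trans; eauto.
  - apply sim_comm.
  - apply sim_assoc.
  - apply sim_idem.
  - change (sim (Plus (der pos B r) (der pos B (Lit lit0))) (der pos B r)).
    rewrite der_lit0 by exact HB; apply sim_unit.
  - apply sim_Plus; auto.
  - rewrite (nu_sim _ _ Hsim1); destruct (nu r').
    + apply sim_Plus; auto; apply sim_Cat; auto.
    + apply sim_Cat; auto.
  - apply sim_And; auto.
  - apply sim_Cat; auto; apply sim_Star; auto.
  - apply sim_Neg; auto.
Qed.

End Similarity.

Section Sums.
Context {T : Type}.

Fixpoint sum_ere (l : list (ere T)) : ere T :=
  match l with
  | [] => Lit lit0
  | x :: l => Plus x (sum_ere l)
  end.

Lemma der_sum_ere (pos : bool) (B : lit T) (l : list (ere T)) :
  (exists x, B x) -> der pos B (sum_ere l) = sum_ere (map (der pos B) l).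
Proof.
  intros HB; induction l as [| x l IH]; simpl.
  - apply der_lit0, HB.
  - rewrite IH; reflexivity.
Qed.

Lemma sum_ere_app (l1 l2 : list (ere T)) :
  sim (sum_ere (l1 ++ l2)) (Plus (sum_ere l1) (sum_ere l2)).
Proof.
  induction l1 as [| x l1 IH]; simpl.
  - eapply sim_trans; [apply sim_sym, sim_unit | apply sim_comm].
  - eapply sim_trans; [apply sim_Plus; [apply sim_refl | exact IH] |].
    apply sim_sym, sim_assoc.
Qed.

Lemma sum_ere_Forall2_sim (l l' : list (ere T)) :
  Forall2 sim l l' -> sim (sum_ere l) (sum_ere l').
Proof.
  induction 1; simpl; [apply sim_refl | apply sim_Plus; auto].
Qed.

Lemma sum_ere_absorb (x : ere T) (l : list (ere T)) :
  In x l -> sim (Plus x (sum_ere l)) (sum_ere l).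
Proof.
  induction l as [| y l IH]; simpl; [intros [] |]; intros [<- | Hx].
  - eapply sim_trans; [apply sim_sym, sim_assoc |].
    apply sim_Plus; [apply sim_idem | apply sim_refl].
  - eapply sim_trans; [apply sim_sym, sim_assoc |].
    eapply sim_trans; [apply sim_Plus; [apply sim_comm | apply sim_refl] |].
    eapply sim_trans; [apply sim_assoc |].
    apply sim_Plus; [apply sim_refl | auto].
Qed.

Lemma sum_ere_incl (l l' : list (ere T)) :
  incl l l' -> sim (Plus (sum_ere l) (sum_ere l')) (sum_ere l').
Proof.
  induction l as [| x l IH]; simpl; intros Hincl.
  - eapply sim_trans; [apply sim_comm | apply sim_unit].
  - eapply sim_trans; [apply sim_assoc |].
    eapply sim_trans.
    + apply sim_Plus; [apply sim_refl | apply IH; eapply incl_cons_inv, Hincl].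
    + apply sum_ere_absorb, Hincl; left; reflexivity.
Qed.

Lemma sum_ere_same_elements (l l' : list (ere T)) :
  incl l l' -> incl l' l -> sim (sum_ere l) (sum_ere l').
Proof.
  intros H H'.
  eapply sim_trans; [apply sim_sym, (sum_ere_incl _ _ H') |].
  eapply sim_trans; [apply sim_comm | apply sum_ere_incl, H].
Qed.

End Sums.

Section FiniteUpToSim.
Context {T : Type}.

Definition fin_sim (P : ere T -> Prop) : Prop :=
  exists L, forall t, P t -> exists q, In q L /\ sim t q.

Definition sums (P : ere T -> Prop) (t : ere T) : Prop :=
  exists l, Forall P l /\ sim t (sum_ere l).

Lemma fin_sim_mono (P Q : ere T -> Prop) :
  (forall t, P t -> Q t) -> fin_sim Q -> fin_sim P.
Proof. intros H [L HL]; exists L; auto. Qed.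

Lemma fin_sim_list (L : list (ere T)) : fin_sim (fun t => In t L).
Proof. exists L; intros t Ht; exists t; split; [exact Ht | apply sim_refl]. Qed.

Lemma fin_sim_or (P Q : ere T -> Prop) :
  fin_sim P -> fin_sim Q -> fin_sim (fun t => P t \/ Q t).
Proof.
  intros [L1 H1] [L2 H2]; exists (L1 ++ L2); intros t [Ht | Ht].
  - destruct (H1 t Ht) as [q [Hq Hs]]; exists q; split; auto; apply in_or_app; auto.
  - destruct (H2 t Ht) as [q [Hq Hs]]; exists q; split; auto; apply in_or_app; auto.
Qed.

Lemma fin_sim_map (f : ere T -> ere T) (P : ere T -> Prop) :
  (forall a a', sim a a' -> sim (f a) (f a')) ->
  fin_sim P -> fin_sim (fun t => exists a, P a /\ t = f a).
Proof.
  intros Hf [L HL]; exists (map f L); intros t [a [Pa ->]].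
  destruct (HL a Pa) as [a' [Ha' Sa]].
  exists (f a'); split; [apply in_map, Ha' | apply Hf, Sa].
Qed.

Lemma fin_sim_map2 (f : ere T -> ere T -> ere T) (P Q : ere T -> Prop) :
  (forall a a' b b', sim a a' -> sim b b' -> sim (f a b) (f a' b')) ->
  fin_sim P -> fin_sim Q -> fin_sim (fun t => exists a b, P a /\ Q b /\ t = f a b).
Proof.
  intros Hf [L1 H1] [L2 H2]; exists (flat_map (fun a => map (f a) L2) L1).
  intros t [a [b [Pa [Qb ->]]]].
  destruct (H1 a Pa) as [a' [Ha' Sa]]; destruct (H2 b Qb) as [b' [Hb' Sb]].
  exists (f a' b'); split.
  - apply in_flat_map; exists a'; split; [exact Ha' | apply in_map, Hb'].
  - apply Hf; assumption.
Qed.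

Fixpoint sublists {A : Type} (L : list A) : list (list A) :=
  match L with
  | [] => [[]]
  | x :: L => map (cons x) (sublists L) ++ sublists L
  end.

Lemma sublists_filter {A : Type} (L : list A) (P : A -> Prop) :
  exists m, In m (sublists L) /\ forall y, In y m <-> In y L /\ P y.
Proof.
  induction L as [| x L [m [Hm Hmy]]]; simpl.
  - exists []; split; [left; reflexivity | simpl; tauto].
  - destruct (classic (P x)) as [Px | Px].
    + exists (x :: m); split; [apply in_or_app; left; apply in_map, Hm |].
      intros y; simpl; rewrite Hmy; split.
      * intros [<- | H]; tauto.
      * intros [[<- | H] Py]; tauto.
    + exists m; split; [apply in_or_app; right; exact Hm |].
      intros y; rewrite Hmy; split.
      * intros H; simpl; tauto.
      * intros [[<- | H] Py]; tauto.
Qed.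

(* A sum is similar to the sum of the distinct representatives of its summands,
   so the sums of the sublists of a list of representatives suffice. *)
Lemma fin_sim_sums (P : ere T -> Prop) : fin_sim P -> fin_sim (sums P).
Proof.
  intros [L HL]; exists (map sum_ere (sublists L)).
  intros t [l [Hl Ht]].
  assert (Hrep : exists l', Forall2 sim l l' /\ incl l' L).
  { clear Ht; induction Hl as [| x l Px _ [l' [Hs Hincl]]].
    - exists []; split; [constructor | intros y []].
    - destruct (HL x Px) as [q [Hq Sq]].
      exists (q :: l'); split; [constructor; assumption | apply incl_cons; assumption]. }
  destruct Hrep as [l' [Hs Hincl]].
  destruct (sublists_filter L (fun y => In y l')) as [m [Hm Hmy]].
  exists (sum_ere m); split; [apply in_map, Hm |].
  eapply sim_trans; [exact Ht |].
  eapply sim_trans; [apply sum_ere_Forall2_sim, Hs |].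
  apply sum_ere_same_elements; intros y Hy; apply Hmy; [split; auto | exact Hy].
Qed.

Lemma sums_sim (P : ere T -> Prop) (t t' : ere T) :
  sim t t' -> sums P t' -> sums P t.
Proof.
  intros Hs [l [Hl Ht']]; exists l; split; [exact Hl | eapply sim_trans; eauto].
Qed.

Lemma sums_single (P : ere T -> Prop) (t : ere T) : P t -> sums P t.
Proof.
  intros Pt; exists [t]; split; [constructor; auto | apply sim_sym, sim_unit].
Qed.

Lemma sums_Plus (P : ere T -> Prop) (a b : ere T) :
  sums P a -> sums P b -> sums P (Plus a b).
Proof.
  intros [la [Hla Ha]] [lb [Hlb Hb]]; exists (la ++ lb); split.
  - apply Forall_app; split; assumption.
  - eapply sim_trans; [apply sim_Plus; eassumption | apply sim_sym, sum_ere_app].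
Qed.

Lemma sums_sum_ere (P : ere T -> Prop) (l : list (ere T)) :
  Forall (sums P) l -> sums P (sum_ere l).
Proof.
  induction 1; simpl.
  - exists []; split; [constructor | apply sim_refl].
  - apply sums_Plus; assumption.
Qed.

Lemma der_sums (P : ere T -> Prop) (pos : bool) (B : lit T) (t : ere T) :
  (exists x, B x) -> (forall y, P y -> sums P (der pos B y)) ->
  sums P t -> sums P (der pos B t).
Proof.
  intros HB HP [l [Hl Ht]].
  apply sums_sim with (der pos B (sum_ere l)); [apply der_sim; assumption |].
  rewrite der_sum_ere by exact HB.
  apply sums_sum_ere, Forall_map; eapply Forall_impl; [exact HP | exact Hl].
Qed.

End FiniteUpToSim.

Section Derivatives.
Context {T : Type}.

Inductive derivs (r : ere T) : ere T -> Prop :=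
| derivs_refl : derivs r r
| derivs_der t pos B : derivs r t -> (exists x, B x) -> derivs r (der pos B t).

Lemma derivs_Eps (t : ere T) : derivs Eps t -> In t [Eps; Lit lit0].
Proof.
  induction 1 as [| t pos B _ [<- | [<- | []]] HB]; try (simpl; auto; fail).
  rewrite der_lit0 by exact HB; simpl; auto.
Qed.

Lemma derivs_Lit (A : lit T) (t : ere T) : derivs (Lit A) t -> In t [Lit A; Eps; Lit lit0].
Proof.
  induction 1 as [| t pos B _ [<- | [<- | [<- | []]]] HB]; try (simpl; auto; fail).
  - simpl; destruct pos, pdec; simpl; auto.
  - rewrite der_lit0 by exact HB; simpl; auto.
Qed.

Lemma derivs_componentwise (c : ere T -> ere T -> ere T) (r s t : ere T) :
  (forall pos B a b, der pos B (c a b) = c (der pos B a) (der pos B b)) ->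
  derivs (c r s) t -> exists a b, derivs r a /\ derivs s b /\ t = c a b.
Proof.
  intros Hc; induction 1 as [| t pos B _ [a [b [Ha [Hb ->]]]] HB].
  - exists r, s; repeat split; constructor.
  - exists (der pos B a), (der pos B b); repeat split; try (constructor; assumption).
    apply Hc.
Qed.

Lemma derivs_Neg (r t : ere T) : derivs (Neg r) t -> exists a, derivs r a /\ t = Neg a.
Proof.
  induction 1 as [| t pos B _ [a [Ha ->]] HB].
  - exists r; split; [constructor | reflexivity].
  - exists (der (negb pos) B a); split; [constructor; assumption | reflexivity].
Qed.

Lemma derivs_Cat (r s t : ere T) : derivs (Cat r s) t ->
  sums (fun y => (exists a, derivs r a /\ y = Cat a s) \/ derivs s y) t.
Proof.
  induction 1 as [| t pos B _ IH HB].
  - apply sums_single; left; exists r; split; [constructor | reflexivity].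
  - apply der_sums; [exact HB | | exact IH].
    intros y [[a [Ha ->]] | Hy]; simpl.
    + assert (Hleft : sums (fun y => (exists a, derivs r a /\ y = Cat a s) \/ derivs s y)
                        (Cat (der pos B a) s)).
      { apply sums_single; left; exists (der pos B a).
        split; [constructor; assumption | reflexivity]. }
      destruct (nu a); [apply sums_Plus; [exact Hleft |] | exact Hleft].
      apply sums_single; right; constructor; [constructor | exact HB].
    + apply sums_single; right; constructor; assumption.
Qed.

Lemma derivs_Star (r t : ere T) : derivs (Star r) t ->
  t = Star r \/ sums (fun y => exists a, derivs r a /\ y = Cat a (Star r)) t.
Proof.
  assert (Hterm : forall pos B a, derivs r a -> (exists x, B x) ->
            sums (fun y => exists a, derivs r a /\ y = Cat a (Star r))
                 (Cat (der pos B a) (Star r))).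
  { intros pos B a Ha HB; apply sums_single.
    exists (der pos B a); split; [constructor; assumption | reflexivity]. }
  induction 1 as [| t pos B _ [-> | IH] HB]; [left; reflexivity | right ..].
  - apply Hterm; [constructor | exact HB].
  - apply der_sums; [exact HB | | exact IH].
    intros y [a [Ha ->]]; simpl.
    destruct (nu a); [apply sums_Plus |]; apply Hterm; auto; constructor.
Qed.

Lemma derivs_fin_sim (r : ere T) : fin_sim (derivs r).
Proof.
  induction r as [| A | r1 IH1 r2 IH2 | r1 IH1 r2 IH2 | r IH | r1 IH1 r2 IH2 | r IH].
  - eapply fin_sim_mono; [apply derivs_Eps | apply fin_sim_list].
  - eapply fin_sim_mono; [apply derivs_Lit | apply fin_sim_list].
  - eapply fin_sim_mono; [intros t; apply derivs_componentwise; reflexivity |].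
    apply fin_sim_map2; [intros; apply sim_Plus; assumption | exact IH1 | exact IH2].
  - eapply fin_sim_mono; [apply derivs_Cat |].
    apply fin_sim_sums, fin_sim_or; [| exact IH2].
    apply fin_sim_map; [intros; apply sim_Cat; [assumption | apply sim_refl] | exact IH1].
  - eapply fin_sim_mono; [apply derivs_Star |].
    apply fin_sim_or; [apply (fin_sim_mono _ (fun t => In t [Star r])) |].
    + intros t ->; left; reflexivity.
    + apply fin_sim_list.
    + apply fin_sim_sums, fin_sim_map; [| exact IH].
      intros; apply sim_Cat; [assumption | apply sim_refl].
  - eapply fin_sim_mono; [intros t; apply derivs_componentwise; reflexivity |].
    apply fin_sim_map2; [intros; apply sim_And; assumption | exact IH1 | exact IH2].
  - eapply fin_sim_mono; [apply derivs_Neg |].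
    apply fin_sim_map; [intros; apply sim_Neg; assumption | exact IH].
Qed.

End Derivatives.

Lemma lit_nonempty {T : Type} (A : lit T) : A <> lit0 -> exists x, A x.
Proof.
  intros HA; apply NNPP; intros Hempty; apply HA.
  apply functional_extensionality; intros x.
  apply propositional_extensionality; split; [| intros []].
  intros Ax; apply Hempty; exists x; exact Ax.
Qed.

Lemma Fiter_derivs {T : Type} (r s : ere T) (i : nat) (p : ere T * ere T) :
  Fiter i (fun q => q = (r, s)) p -> derivs r (fst p) /\ derivs s (snd p).
Proof.
  revert p; induction i as [| i IH]; simpl; intros p Hp.
  - subst p; split; constructor.
  - destruct Hp as [Hp | [r' [s' [A [Hp [_ [HA ->]]]]]]]; [apply IH, Hp |].
    destruct (IH _ Hp) as [Hr Hs]; simpl in *.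
    split; constructor; auto; apply lit_nonempty, HA.
Qed.

Lemma finite_up_to_sim_components {T : Type} (P : pairset T) (P1 P2 : ere T -> Prop) :
  fin_sim P1 -> fin_sim P2 -> (forall p, P p -> P1 (fst p) /\ P2 (snd p)) ->
  finite_up_to_sim P.
Proof.
  intros [L1 H1] [L2 H2] HP; exists (flat_map (fun a => map (pair a) L2) L1).
  intros p Hp; destruct (HP p Hp) as [Hp1 Hp2].
  destruct (H1 _ Hp1) as [a [Ha Sa]]; destruct (H2 _ Hp2) as [b [Hb Sb]].
  exists (a, b); repeat split; [| exact Sa | exact Sb].
  apply in_flat_map; exists a; split; [exact Ha | apply in_map, Hb].
Qed.

Theorem theorem5 (T : Type) (U : lit T -> Prop) :
  countable T -> literal_family U ->
  forall r s : ere T, lits_in U r -> lits_in U s ->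
  finite_up_to_sim (Funion r s).
Proof.
  intros _ _ r s _ _.
  apply (finite_up_to_sim_components _ _ _ (derivs_fin_sim r) (derivs_fin_sim s)).
  intros p [i Hp]; exact (Fiter_derivs r s i p Hp).
Qed.
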